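(* For every integer $n\ge 5$, the independence polynomial $I(T_{5,n};t)$ is unimodal and its mode belongs to $\{\lambda_{n+2},\lambda_{n+2}+1,\lambda_{n+2}+2\}$, where $\lambda_{k}$ denotes the mode of the independence polynomial $I(P_k;t)$ of the path $P_k$ on $k$ vertices.
   Context: For a simple graph $G$, the independence polynomial is $I(G;t)=\sum_{k\ge 0}s_k(G)t^k$, where $s_k(G)$ is the number of independent sets (sets of pairwise non-adjacent vertices) of size $k$ in $G$. $P_k$ is the path on $k$ vertices; its independence polynomial is known to be unimodal. For integers $m\ge 3$, $n\ge 1$, the tadpole graph $T_{m,n}$ is the simple graph with vertex set $\{x_1,\dots,x_m,y_1,\dots,y_n\}$ and edges $\{x_i,x_{i+1}\}$ for $1\le i\le m-1$, $\{x_m,x_1\}$, $\{y_j,y_{j+1}\}$ for $1\le j\le n-1$, and $\{x_m,y_1\}$. A polynomial $\sum a_kt^k$ with nonnegative coefficients is unimodal if $a_0\le\cdots\le a_m\ge a_{m+1}\ge\cdots$ for some $m$; with $a_{-1}=0$, its mode is the unique $i$ with $a_{i-1}<a_i\ge a_{i+1}\ge a_{i+2}\ge\cdots$. *)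

From mathcomp Require Import all_boot.
Set Implicit Arguments. Unset Strict Implicit. Unset Printing Implicit Defensive.

(* A simple graph is given by a symmetric irreflexive relation on a finType. *)

Definition independent (T : finType) (e : rel T) (S : {set T}) : bool :=
  [forall x in S, forall y in S, ~~ e x y].

(* s_k(G): the number of independent sets of size k;
   I(G;t) = \sum_k indep_count e k * t^k *)
Definition indep_count (T : finType) (e : rel T) (k : nat) : nat :=
  #|[set S : {set T} | independent e S && (#|S| == k)]|.

(* Path P_k on vertices 'I_k (vertex i+1 of the paper is i here):
   edges {i, i+1}. *)
Definition path_adj (k : nat) : rel 'I_k :=
  fun u v => (u.+1 == v :> nat) || (v.+1 == u :> nat).

(* Tadpole T_{m,n} on vertices 'I_(m+n):
   x_i (1 <= i <= m) is vertex i-1, y_j (1 <= j <= n) is vertex m+j-1.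
   Directed edge list (then symmetrised):
   {x_i,x_(i+1)} for 1<=i<=m-1, {x_m,x_1}, {y_j,y_(j+1)} for 1<=j<=n-1,
   {x_m,y_1}. *)
Definition tadpole_edge (m n : nat) (u v : nat) : bool :=
  [|| (u.+1 == v) && (v < m)
    , (u == m.-1) && (v == 0)
    , (m <= u) && (u.+1 == v) && (v < m + n)
    | (u == m.-1) && (v == m) ].

Definition tadpole_adj (m n : nat) : rel 'I_(m + n) :=
  fun u v => tadpole_edge m n u v || tadpole_edge m n v u.

Definition unimodal (a : nat -> nat) : Prop :=
  exists m, (forall i, i < m -> a i <= a i.+1) /\
            (forall i, m <= i -> a i.+1 <= a i).

Definition is_mode (a : nat -> nat) (i : nat) : Prop :=
  (if i is i'.+1 then a i' < a i else 0 < a 0) /\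
  (forall j, i <= j -> a j.+1 <= a j).

From mathcomp Require Import all_boot ssralg zify ring.
Set Implicit Arguments. Unset Strict Implicit. Unset Printing Implicit Defensive.

(* Deleting a vertex v gives I(G) = I(G - v) + t I(G - N[v]). Along a path this is
   the recurrence x_(c+2) = x_(c+1) + t x_c, which I(P_k), whose coefficients are
   C(k+1-j, j), obeys; deleting the end of the tail shows that I(T_(5,n)) obeys it in
   n as well, and comparing the initial values I(P_4) and I(C_5) gives
     I(T_(5,n)) = (1 + 2t) I(P_(n+2)) + t (1 + t) I(P_n).
   The ratio of consecutive coefficients of I(P_k) decreases, so once they fall they
   keep falling. Writing the mode of I(P_(n+2)) as L and n = 2L + d, the ratio
   inequalities at L - 1 and L tell where I(P_n) rises and falls, so each of the four
   summands increases strictly below L and decreases from L + 2 on; a binomial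
   inequality settles the step from L + 1 to L + 2. Hence the mode of I(T_(5,n)) is
   L or L + 1. *)

(* Multiplication by t on coefficient sequences. *)
Definition shift (a : nat -> nat) (k : nat) : nat := if k is k'.+1 then a k' else 0.

(* The coefficients of I(P_(m-1)); path_coef 0 and path_coef 1 are both 1. *)
Definition path_coef (m k : nat) : nat := 'C(m - k, k).

Lemma path_coef0 k : path_coef 0 k = (k == 0).
Proof. by case: k. Qed.

Lemma path_coef1 k : path_coef 1 k = (k == 0).
Proof. by case: k => [|[]]. Qed.

Lemma path_coefS m k : path_coef m.+2 k = path_coef m.+1 k + shift (path_coef m) k.
Proof.
case: k => [|k] /=; first by rewrite /path_coef !subn0 !bin0.
rewrite /path_coef; case: (leqP k m) => km; last by rewrite !bin_small //; lia.
by rewrite !subSS (subSn km) binS.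
Qed.

Definition fib_rec_on (c0 c1 : nat) (x : nat -> nat -> nat) : Prop :=
  forall c, c0 <= c -> c.+2 <= c1 -> forall k, x c.+2 k = x c.+1 k + shift (x c) k.

Lemma fib_rec_eq c0 c1 (x y : nat -> nat -> nat) :
  fib_rec_on c0 c1 x -> fib_rec_on c0 c1 y -> x c0 =1 y c0 -> x c0.+1 =1 y c0.+1 ->
  forall c, c0 <= c <= c1 -> x c =1 y c.
Proof.
move=> recx recy E0 E1.
have two_step m : c0 + m.+1 <= c1 ->
    x (c0 + m) =1 y (c0 + m) /\ x (c0 + m).+1 =1 y (c0 + m).+1.
  elim: m => [|m IH]; first by rewrite addn0.
  rewrite !addnS in IH * => hm; have [Em Em1] := IH (ltnW hm).
  split=> // k; rewrite recx ?recy ?leq_addr // Em1.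
  by case: k => //= k; rewrite Em.
move=> c /andP[/subnKC <-]; case: (c - c0) => [|m] hm; first by rewrite addn0.
by rewrite addnS; case: (two_step m hm).
Qed.

Section IndependentSets.
Variables (T : finType) (e : rel T).
Hypotheses (e_sym : symmetric e) (e_irr : irreflexive e).

Definition nbhd (v : T) : {set T} := [set u | e v u].

Definition indep_count_in (A : {set T}) (k : nat) : nat :=
  #|[set S : {set T} | [&& S \subset A, independent e S & #|S| == k]]|.

Lemma independentP (S : {set T}) :
  reflect {in S &, forall x y, ~~ e x y} (independent e S).
Proof.
apply: (iffP forall_inP) => [H x y xS | H x xS]; first exact: forall_inP (H x xS) y.
by apply/forall_inP => y; apply: H.
Qed.

Lemma independentU1 v (S : {set T}) :
  independent e (v |: S) = [disjoint S & nbhd v] && independent e S.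
Proof.
rewrite disjoints_subset.
apply/independentP/andP => [H | [/subsetP dis /independentP ind] x y].
  split; last first.
    by apply/independentP => x y xS yS; apply: H; rewrite !in_setU1 ?xS ?yS orbT.
  by apply/subsetP => x xS; rewrite !inE e_sym; apply: H; rewrite !in_setU1 ?eqxx ?xS ?orbT.
have nv u : u \in S -> ~~ e v u by move=> /dis; rewrite !inE.
rewrite !in_setU1 => /predU1P[-> | xS] /predU1P[-> | yS]; rewrite ?e_irr ?nv //.
  by rewrite e_sym nv.
exact: ind.
Qed.

Lemma indep_count_setT k : indep_count e k = indep_count_in setT k.
Proof. by apply: eq_card => S; rewrite !inE subsetT. Qed.

Lemma indep_count_in_set0 k : indep_count_in set0 k = (k == 0).
Proof.
rewrite /indep_count_in (_ : [set S | _] = if k == 0 then [set set0] else set0).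
  by case: (k == 0); rewrite ?cards1 ?cards0.
apply/setP => S; rewrite !inE subset0.
have [-> | nS] := eqVneq S set0; last first.
  case: (k == 0); rewrite ?inE ?(negbTE nS) ?andbF //.
rewrite cards0 eq_sym; case: (k == 0); rewrite ?inE ?eqxx ?andbT ?andbF //.
by apply/forall_inP => x; rewrite inE.
Qed.

Lemma indep_count_in_del (A : {set T}) v k : v \in A ->
  indep_count_in A k =
  indep_count_in (A :\ v) k + shift (indep_count_in (A :\ v :\: nbhd v)) k.
Proof.
move=> vA; rewrite /indep_count_in -(cardsID [set S : {set T} | v \in S]) addnC.
congr addn.
  by apply: eq_card => S; rewrite !inE subsetD1; case: (v \in S); case: (S \subset A).
case: k => [|k] /=.
  apply: eq_card0 => S; rewrite !inE cards_eq0.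
  by apply/negP => /andP[/and3P[_ _ /eqP ->]]; rewrite inE.
rewrite -[RHS](card_in_imset (f := fun S => v |: S)); last first.
  move=> S1 S2; rewrite !inE => /andP[/subsetDP[/subsetD1P[_ vS1] _] _].
  move=> /andP[/subsetDP[/subsetD1P[_ vS2] _] _] /(congr1 (fun S => S :\ v)).
  by rewrite !setU1K.
apply: eq_card => S; rewrite !inE; apply/idP/imsetP.
  move=> /andP[/and3P[SA indS cardS] vS]; exists (S :\ v); last by rewrite setD1K.
  move: indS cardS; rewrite -{1 2}(setD1K vS) independentU1 cardsU1 !inE eqxx /=.
  by rewrite add1n eqSS => /andP[dis ->] ->; rewrite subsetD dis setSD.
case=> S' + ->; rewrite !inE => /andP[/subsetDP[/subsetD1P[S'A vS'] dis]].
case/andP=> indS' /eqP cardS'; rewrite independentU1 dis indS' cardsU1 vS' cardS'.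
by rewrite subUset sub1set vA S'A /= add1n !eqxx.
Qed.

End IndependentSets.

Section Segments.
Variables (K : nat) (e : rel 'I_K).
Hypotheses (e_sym : symmetric e) (e_irr : irreflexive e).

Definition seg (a b : nat) : {set 'I_K} := [set x : 'I_K | a <= x < b].

Local Notation count a b := (indep_count_in e (seg a b)).

Lemma seg_empty a b : b <= a -> seg a b = set0.
Proof. by move=> ba; apply/setP => x; rewrite !inE; apply/negbTE; lia. Qed.

Lemma segT : seg 0 K = setT.
Proof. by apply/setP => x; rewrite !inE ltn_ord. Qed.

Lemma indep_count_seg_top a c (w : 'I_K) : w = c :> nat -> a <= c ->
  (forall u : 'I_K, a <= u < c -> e w u = (u.+1 == c)) ->
  forall k, count a c.+1 k = count a c k + shift (count a c.-1) k.
Proof.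
move=> wc ac wnb k.
rewrite (indep_count_in_del e_sym e_irr _ (v := w)); last by rewrite inE wc ac /=.
have -> : seg a c.+1 :\ w = seg a c.
  by apply/setP => u; rewrite !inE -(inj_eq (@ord_inj K)) wc; lia.
congr (_ + shift (indep_count_in e _) k); apply/setP => u; rewrite !inE.
case: (ltnP u c) => uc; last by rewrite !andbF; apply/esym/negbTE; lia.
case: (leqP a u) => au; first by rewrite wnb ?au //; lia.
by rewrite andbF andFb.
Qed.

Lemma indep_count_seg_path a b : a < b -> b <= K ->
  (forall u v : 'I_K, a <= u < b -> a <= v < b ->
     e u v = (u.+1 == v :> nat) || (v.+1 == u :> nat)) ->
  forall c, a <= c <= b -> count a c =1 path_coef (c - a).+1.
Proof.
move=> ab bK path_ab; apply: fib_rec_eq.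
- move=> c ac cb k; have cK : c.+1 < K by apply: leq_trans bK.
  apply: (indep_count_seg_top (w := Ordinal cK)) => //= [|u /andP[au uc]].
    exact: leqW.
  by rewrite path_ab ?au ?(ltn_trans uc) //=; lia.
- by move=> c ac _ k; rewrite !subSn ?path_coefS // leqW.
- by move=> k; rewrite seg_empty // indep_count_in_set0 subnn path_coef1.
move=> k; have aK : a < K by apply: leq_trans bK.
rewrite (indep_count_seg_top (w := Ordinal aK)) //= => [|u]; last by lia.
rewrite !seg_empty ?leq_pred // subSnn path_coefS.
by case: k => [|k] /=; rewrite !indep_count_in_set0 ?path_coef0 ?path_coef1.
Qed.

End Segments.

Lemma path_adj_sym k : symmetric (@path_adj k).
Proof. by move=> u v; rewrite /path_adj orbC. Qed.

Lemma path_adj_irr k : irreflexive (@path_adj k).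
Proof. by move=> u; rewrite /path_adj; lia. Qed.

Lemma indep_count_path k : indep_count (@path_adj k) =1 path_coef k.+1.
Proof.
move=> j; rewrite indep_count_setT -segT.
case: k => [|k]; first by rewrite seg_empty // indep_count_in_set0 path_coef1.
have := @indep_count_seg_path _ _ (@path_adj_sym _) (@path_adj_irr _) 0 k.+1.
by move=> -> //; rewrite ?subn0 ?leqnn.
Qed.

(* (1 + 2t) I(P_(m+1)) + t (1 + t) I(P_(m-1)): this is I(T_(5,m-1)) for m >= 1, and
   tadpole_coef 0 = I(P_4) continues the recurrence in m one step down. *)
Definition tadpole_coef (m k : nat) : nat :=
  path_coef m.+2 k + 2 * shift (path_coef m.+2) k +
  shift (path_coef m) k + shift (shift (path_coef m)) k.

Lemma tadpole_coefS m k :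
  tadpole_coef m.+2 k = tadpole_coef m.+1 k + shift (tadpole_coef m) k.
Proof.
by rewrite /tadpole_coef; case: k => [|[|[|k]]] /=; do ?rewrite !path_coefS /=; lia.
Qed.

Lemma tadpole_coef0 k : tadpole_coef 0 k = path_coef 5 k.
Proof.
by case: k => [|[|[|k]]] //; rewrite /tadpole_coef /path_coef /= !bin_small //; lia.
Qed.

Lemma tadpole_coef1 k : tadpole_coef 1 k = path_coef 5 k + shift (path_coef 3) k.
Proof.
by case: k => [|[|[|k]]] //; rewrite /tadpole_coef /path_coef /= !bin_small //; lia.
Qed.

Section Tadpole.
Variable n : nat.
Local Notation adj := (@tadpole_adj 5 n).
Local Notation count a b := (indep_count_in adj (seg (5 + n) a b)).

Lemma tadpole_adj_sym : symmetric adj.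
Proof. by move=> u v; rewrite /tadpole_adj orbC. Qed.

Lemma tadpole_adj_irr : irreflexive adj.
Proof. by move=> u; rewrite /tadpole_adj /tadpole_edge; lia. Qed.

Lemma tadpole_adj_cycle (u v : 'I_(5 + n)) : u < 4 -> v < 4 ->
  adj u v = (u.+1 == v :> nat) || (v.+1 == u :> nat).
Proof. by move=> u4 v4; rewrite /tadpole_adj /tadpole_edge; lia. Qed.

Lemma tadpole_adj_hub (w u : 'I_(5 + n)) : w = 4 :> nat -> u < 4 ->
  adj w u = (u == 0 :> nat) || (u == 3 :> nat).
Proof. by move=> w4 u4; rewrite /tadpole_adj /tadpole_edge w4; lia. Qed.

Lemma tadpole_adj_tail (w u : 'I_(5 + n)) : 5 <= w -> u < w -> adj w u = (u.+1 == w).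
Proof.
by move=> w5 uw; have := ltn_ord w; rewrite /tadpole_adj /tadpole_edge; lia.
Qed.

Lemma indep_count_tadpole_path_seg a b : a < b <= 4 ->
  forall k, count a b k = path_coef (b - a).+1 k.
Proof.
case/andP=> ab b4; apply: (indep_count_seg_path tadpole_adj_sym tadpole_adj_irr ab).
- by apply: leq_trans b4 _; rewrite ltnW // ltnS leq_addr.
- by move=> u v /andP[_ ub] /andP[_ vb]; apply: tadpole_adj_cycle; apply: leq_trans b4.
- by rewrite ltnW /=.
Qed.

Lemma indep_count_tadpole_cycle k :
  count 0 5 k = path_coef 5 k + shift (path_coef 3) k.
Proof.
have w4 : 4 < 5 + n by rewrite ltnS leq_addr.
have w4_in : Ordinal w4 \in seg (5 + n) 0 5 by rewrite inE.
rewrite (indep_count_in_del tadpole_adj_sym tadpole_adj_irr _ w4_in).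
have -> : seg (5 + n) 0 5 :\ Ordinal w4 = seg (5 + n) 0 4.
  by apply/setP => u; rewrite !inE -(inj_eq (@ord_inj _)) /=; lia.
have -> : seg (5 + n) 0 4 :\: nbhd adj (Ordinal w4) = seg (5 + n) 1 3.
  apply/setP => u; rewrite !inE.
  case: (ltnP u 4) => u4; last by rewrite !andbF; apply/esym/negbTE; lia.
  by rewrite tadpole_adj_hub //; lia.
by case: k => [|k]; rewrite /= !indep_count_tadpole_path_seg.
Qed.

Lemma indep_count_tadpole : indep_count adj =1 tadpole_coef n.+1.
Proof.
move=> k; rewrite indep_count_setT -segT.
have -> : n.+1 = 5 + n - 4 by lia.
apply: (@fib_rec_eq 4 (5 + n) (fun c => count 0 c) (fun c => tadpole_coef (c - 4))).
- move=> c c4 cn j.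
  apply: (indep_count_seg_top tadpole_adj_sym tadpole_adj_irr (w := Ordinal cn)) => //=.
  by move=> u uc; rewrite tadpole_adj_tail.
- by move=> c c4 _ j; rewrite !subSn ?tadpole_coefS // leqW.
- by move=> j; rewrite indep_count_tadpole_path_seg // tadpole_coef0.
- by move=> j; rewrite indep_count_tadpole_cycle tadpole_coef1.
by rewrite leq_addr leqnn.
Qed.

End Tadpole.

Lemma path_coef_ratio m j :
  j.+1 * (m - j) * path_coef m j.+1 = (m - 2 * j) * (m - 2 * j).-1 * path_coef m j.
Proof.
rewrite /path_coef subnS -mulnA mulnCA mul_bin_left mulnCA mul_bin_down mulnA.
by congr (_ * _); lia.
Qed.

Lemma leq_path_coefS m j : (path_coef m j.+1 <= path_coef m j) =
  ((m - 2 * j) * (m - 2 * j).-1 <= j.+1 * (m - j)).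
Proof.
case: (leqP m (2 * j)) => m2j.
  have -> : m - 2 * j = 0 by lia.
  by rewrite /path_coef bin_small //; lia.
have pos : 0 < path_coef m j by rewrite bin_gt0; lia.
rewrite -[RHS](leq_pmul2r pos) -path_coef_ratio leq_pmul2l // muln_gt0 /=; lia.
Qed.

Lemma path_coef_nonincr_step m j :
  path_coef m j.+1 <= path_coef m j -> path_coef m j.+2 <= path_coef m j.+1.
Proof.
rewrite !leq_path_coefS; case: (leqP m (2 * j + 3)) => m_j.
  by rewrite (_ : (m - 2 * j.+1).-1 = 0) ?muln0 //; lia.
have [e ->] : exists e, m = e + 2 * j + 4 by exists (m - (2 * j + 4)); lia.
have -> : e + 2 * j + 4 - 2 * j = e + 4 by lia.
have -> : e + 2 * j + 4 - 2 * j.+1 = e + 2 by lia.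
have -> : e + 2 * j + 4 - j = e + j + 4 by lia.
have -> : e + 2 * j + 4 - j.+1 = e + j + 3 by lia.
rewrite !addnS !addn0 /=; nia.
Qed.

Lemma path_coef_nonincr_from m j : path_coef m j.+1 <= path_coef m j ->
  forall i, j <= i -> path_coef m i.+1 <= path_coef m i.
Proof.
move=> dec i /subnK <-; elim: (i - j) => [|k IH] //.
by rewrite addSn; apply: path_coef_nonincr_step.
Qed.

Lemma path_coef_incr_below m j : path_coef m j < path_coef m j.+1 ->
  forall i, i <= j -> path_coef m i < path_coef m i.+1.
Proof.
move=> inc i ij; rewrite ltnNge; apply: contraL inc => dec.
by rewrite -leqNgt (path_coef_nonincr_from dec).
Qed.

Lemma path_coef_mode_exists m : exists L, is_mode (path_coef m) L.
Proof.
have dec_somewhere : exists j, path_coef m j.+1 <= path_coef m j.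
  by exists m; rewrite /path_coef bin_small //; lia.
case: (ex_minnP dec_somewhere) => L decL minL; exists L; split.
  case: L decL minL => [|l] _ minL; first by rewrite /path_coef bin0.
  by rewrite ltnNge; apply/negP => /minL; rewrite ltnn.
exact: path_coef_nonincr_from.
Qed.

Lemma path_coef_mode_incr m L :
  is_mode (path_coef m) L -> forall i, i < L -> path_coef m i < path_coef m i.+1.
Proof. by case: L => [|l] [inc _] i // il; apply: (path_coef_incr_below inc). Qed.

(* The last two conditions are leq_path_coefS at L and its failure at L - 1. *)
Lemma path_coef_mode_shape N L : 5 <= N -> is_mode (path_coef N.+3) L ->
  exists d, [/\ N = 2 * L + d, 2 <= L,
    (d + 3) * (d + 2) <= L.+1 * (L + d + 3) & L * (L + d + 4) < (d + 5) * (d + 4)].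
Proof.
move=> N5 [inc dec]; move: (dec L (leqnn L)); rewrite leq_path_coefS.
case: L inc {dec} => [|[|l]] inc dec.
- by exfalso; move: dec; rewrite muln0 !subn0 /= mul1n; clear inc; nia.
- exfalso; move: dec; clear inc.
  have -> : N.+3 - 2 * 1 = N.+1 by lia.
  have -> : N.+3 - 1 = N.+2 by lia.
  rewrite -pred_Sn; nia.
move: inc; rewrite ltnNge leq_path_coefS -ltnNge => inc.
case: (leqP (2 * l.+2) N) => [/subnKC NE | small]; last first.
  exfalso; move: inc; case: (leqP (2 * l) N) => [/subnKC NE | N2l]; last first.
    have -> : (N.+3 - 2 * l.+1).-1 = 0 by lia.
    by rewrite muln0.
  move: N5 small; rewrite -NE; move: (N - 2 * l) => x N5 small.
  have -> : (2 * l + x).+3 - 2 * l.+1 = x.+1 by lia.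
  have -> : (2 * l + x).+3 - l.+1 = l + x + 2 by lia.
  by rewrite -pred_Sn; clear dec NE; nia.
move: inc dec; rewrite -NE; move: (N - _) => d.
have -> : (2 * l.+2 + d).+3 - 2 * l.+2 = d.+3 by lia.
have -> : (2 * l.+2 + d).+3 - l.+2 = l + d + 5 by lia.
have -> : (2 * l.+2 + d).+3 - 2 * l.+1 = d + 5 by lia.
have -> : (2 * l.+2 + d).+3 - l.+1 = l + d + 6 by lia.
move=> inc dec; exists d; split=> //=; nia.
Qed.

Lemma path_coef_shape_nonincr N L d : N = 2 * L + d ->
  (d + 3) * (d + 2) <= L.+1 * (L + d + 3) ->
  forall i, L <= i -> path_coef N.+1 i.+1 <= path_coef N.+1 i.
Proof.
move=> -> c1; apply: path_coef_nonincr_from; rewrite leq_path_coefS.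
have -> : (2 * L + d).+1 - 2 * L = d.+1 by lia.
have -> : (2 * L + d).+1 - L = L + d + 1 by lia.
rewrite -pred_Sn; nia.
Qed.

Lemma path_coef_shape_nondecr N L d : N = 2 * L + d -> 2 <= L ->
  L * (L + d + 4) < (d + 5) * (d + 4) ->
  forall i, i.+2 <= L -> path_coef N.+1 i <= path_coef N.+1 i.+1.
Proof.
move=> -> L2 c2 i iL; apply/ltnW/(@path_coef_incr_below _ (L - 2)); last by lia.
rewrite ltnNge leq_path_coefS -ltnNge.
have -> : (2 * L + d).+1 - 2 * (L - 2) = d + 5 by lia.
have -> : (2 * L + d).+1 - (L - 2) = L + d + 3 by lia.
have -> : (L - 2).+1 = L.-1 by lia.
rewrite (_ : (d + 5).-1 = d + 4); last by lia.
nia.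
Qed.

Lemma binom_window_ineq q d :
  (d + 3) * (d + 2) <= (q + 2) * (q + d + 4) ->
  'C(q + d + 1, q.+2) + 'C(q + d + 3, q.+2) <= 'C(q + d + 3, q) + 'C(q + d + 4, q.+1).
Proof.
move=> c1; set s := q + d + 1.
have -> : q + d + 3 = s.+2 by rewrite /s !addnS.
have -> : q + d + 4 = s.+3 by rewrite /s !addnS.
set B := 'C(s, q); set M := q.+1 * q.+2 * (d + 2) * (d + 3).
(* Scaled by M, all four binomials become polynomial multiples of B. *)
have e1 : q.+1 * q.+2 * 'C(s, q.+2) = d.+1 * d * B.
  rewrite -mulnA mul_bin_left mulnCA mul_bin_left.
  have -> : s - q.+1 = d by rewrite /s; lia.
  have -> : s - q = d.+1 by rewrite /s; lia.
  ring.
have e2 : q.+1 * q.+2 * 'C(s.+2, q.+2) = s.+1 * s.+2 * B.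
  by rewrite -mulnA -mul_bin_diag /= mulnCA -mul_bin_diag /=; ring.
have e3 : (d + 2) * (d + 3) * 'C(s.+2, q) = s.+1 * s.+2 * B.
  have -> : s.+1 * s.+2 * B = s.+2 * (s.+1 * 'C(s, q)) by rewrite /B; ring.
  rewrite (mul_bin_down s.+1) mulnCA (mul_bin_down s.+2).
  have -> : s.+1 - q = d + 2 by rewrite /s; lia.
  have -> : s.+2 - q = d + 3 by rewrite /s; lia.
  ring.
have e4 : q.+1 * 'C(s.+3, q.+1) = s.+3 * 'C(s.+2, q) by rewrite -mul_bin_diag.
have lhsE : M * ('C(s, q.+2) + 'C(s.+2, q.+2)) =
            (d + 2) * (d + 3) * (d.+1 * d + s.+1 * s.+2) * B.
  transitivity ((d + 2) * (d + 3) *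
                (q.+1 * q.+2 * 'C(s, q.+2) + q.+1 * q.+2 * 'C(s.+2, q.+2))).
    by rewrite /M; ring.
  by rewrite e1 e2; ring.
have rhsE : M * ('C(s.+2, q) + 'C(s.+3, q.+1)) =
            q.+2 * (q.+1 + s.+3) * s.+1 * s.+2 * B.
  transitivity (q.+1 * q.+2 * ((d + 2) * (d + 3) * 'C(s.+2, q)) +
                q.+2 * (d + 2) * (d + 3) * (q.+1 * 'C(s.+3, q.+1))).
    by rewrite /M; ring.
  rewrite e4 (_ : _ + _ = (q.+1 * q.+2 + q.+2 * s.+3) * ((d + 2) * (d + 3) * 'C(s.+2, q))).
    by rewrite e3; ring.
  by ring.
have M_gt0 : 0 < M by rewrite !muln_gt0 !addnS.
rewrite -(leq_pmul2l M_gt0) lhsE rhsE leq_mul //.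
by rewrite /s; clear -c1; nia.
Qed.

Lemma path_coef_shape_window N L d : N = 2 * L + d -> 0 < L ->
  (d + 3) * (d + 2) <= L.+1 * (L + d + 3) ->
  path_coef N.+1 L.+1 + path_coef N.+3 L.+1 <= path_coef N.+1 L.-1 + path_coef N.+3 L.
Proof.
move=> ->; case: L => [|q] // _ c1; rewrite /path_coef /=.
have -> : (2 * q.+1 + d).+1 - q.+2 = q + d + 1 by lia.
have -> : (2 * q.+1 + d).+3 - q.+2 = q + d + 3 by lia.
have -> : (2 * q.+1 + d).+1 - q = q + d + 3 by lia.
have -> : (2 * q.+1 + d).+3 - q.+1 = q + d + 4 by lia.
by apply: binom_window_ineq; move: c1; rewrite !addSn; nia.
Qed.

Lemma tadpole_coef_gt0 m : 0 < tadpole_coef m 0.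
Proof. by rewrite /tadpole_coef /path_coef subn0 bin0. Qed.

Lemma tadpole_coef_window N L : 5 <= N -> is_mode (path_coef N.+3) L ->
  (forall j, j < L -> tadpole_coef N.+1 j < tadpole_coef N.+1 j.+1) /\
  (forall j, L < j -> tadpole_coef N.+1 j.+1 <= tadpole_coef N.+1 j).
Proof.
move=> N5 modeL; have [d [NE L2 c1 c2]] := path_coef_mode_shape N5 modeL.
have inc3 := path_coef_mode_incr modeL; have dec3 := modeL.2.
have inc1 := path_coef_shape_nondecr NE L2 c2.
have dec1 := path_coef_shape_nonincr NE c1.
have win := path_coef_shape_window NE (ltnW L2) c1.
rewrite /tadpole_coef; split=> -[|[|j]] jL /=.
- by have := inc3 0 jL; lia.
- by have := inc3 1 jL; have := inc3 0 (ltnW jL); have := inc1 0 L2; lia.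
- have := inc3 j.+2 jL; have := inc3 j.+1 (ltnW jL).
  by have := inc1 j.+1 jL; have := inc1 j (ltnW jL); lia.
- by [].
- by move: L2 jL; lia.
case: (ltnP j L) => jL'.
  have -> : j = L.-1 by lia.
  rewrite !prednK ?(ltnW L2) //.
  by have := dec3 L.+1 (leqW (leqnn L)); have := dec3 L (leqnn L); move: win; lia.
have := dec3 j.+2 (ltnW jL); have := dec3 j.+1 (leqW jL').
by have := dec1 j.+1 (leqW jL'); have := dec1 j jL'; lia.
Qed.

Lemma mode_window (a : nat -> nat) L : 0 < a 0 ->
  (forall j, j < L -> a j < a j.+1) -> (forall j, L < j -> a j.+1 <= a j) ->
  [/\ unimodal a, exists i, is_mode a i & forall i, is_mode a i -> L <= i <= L.+1].
Proof.
move=> a0 inc dec.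
have [M incM modeM] : exists2 M, (forall i, i < M -> a i < a i.+1) & is_mode a M.
  case: (leqP (a L.+1) (a L)) => aL; [exists L | exists L.+1] => //.
  - split; first by case: L inc {dec aL} => // l inc; apply: inc.
    by move=> j; rewrite leq_eqVlt => /predU1P[<- // | /dec].
  - by move=> i; rewrite ltnS leq_eqVlt => /predU1P[-> // | /inc].
split.
- by exists M; split=> [i /incM /ltnW|]; last exact: modeM.2.
- by exists M.
move=> i [up down]; apply/andP; split; rewrite leqNgt; apply/negP => iL.
  by have := down i (leqnn i); rewrite leqNgt inc.
case: i up {down} iL => // i up iL.
by have := dec i iL; rewrite leqNgt up.
Qed.

Lemma eq_is_mode (a b : nat -> nat) i : a =1 b -> is_mode a i -> is_mode b i.
Proof.
move=> ab [up down]; split=> [|j /down]; last by rewrite -!ab.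
by case: i {down} up => [|i]; rewrite -!ab.
Qed.

Theorem proposition3p5 (n : nat) (hn : 5 <= n) :
  unimodal (indep_count (@tadpole_adj 5 n)) /\
  (exists i, is_mode (indep_count (@tadpole_adj 5 n)) i) /\
  (forall i l, is_mode (indep_count (@tadpole_adj 5 n)) i ->
               is_mode (indep_count (@path_adj (n + 2))) l ->
               l <= i <= l + 2).
Proof.
have tadE := indep_count_tadpole n.
have pathE j : indep_count (@path_adj (n + 2)) j = path_coef n.+3 j.
  by rewrite indep_count_path addn2.
have window l : is_mode (path_coef n.+3) l ->
    [/\ unimodal (indep_count (@tadpole_adj 5 n)),
        exists i, is_mode (indep_count (@tadpole_adj 5 n)) i &
        forall i, is_mode (indep_count (@tadpole_adj 5 n)) i -> l <= i <= l.+1].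
  move=> mode_l; have [inc dec] := tadpole_coef_window hn mode_l.
  by apply: mode_window => [|j /inc|j /dec]; rewrite !tadE // tadpole_coef_gt0.
have [L mode_L] := path_coef_mode_exists n.+3.
have [uni ex _] := window L mode_L.
split=> //; split=> // i l mode_i /(eq_is_mode pathE) mode_l.
have [_ _ /(_ i mode_i) /andP[li il]] := window l mode_l.
by rewrite li (leq_trans il) // addn2.
Qed.
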